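(* Let $\mathcal X=\{\vec x^{(1)},\dots,\vec x^{(M)}\}\subset\mathbb{R}^d$. Let $U\subseteq\mathcal P([d])$, for each $\vec w\in U$ let $\mathcal I_{\vec w}$ be a finite set of frequency vectors $\vec\omega\in\mathbb{R}^d$ with $\operatorname{supp}\vec\omega=\vec w$, and let $a^\#_{\vec\omega}\in\mathbb{C}$ be coefficients. Fix $\vec u\in U$ such that no $\vec v\in U$ satisfies $\vec u\subsetneq\vec v$, and set $g(\vec x_{\vec u})=\sum_{\vec\omega\in\mathcal I_{\vec u}}a^\#_{\vec\omega}\mathrm{e}^{\mathrm{i}\langle\vec\omega_{\vec u},\vec x_{\vec u}\rangle}$. Define Monte-Carlo ANOVA terms of $g$ recursively by $$g^{\mathrm{MC}}_\varnothing=\frac1M\sum_{j=1}^M g(\vec x^{(j)}_{\vec u}),\qquad g^{\mathrm{MC}}_{\vec v}(\vec x_{\vec v})=\frac1M\sum_{j=1}^M g\big(\vec x_{\vec v},\vec x^{(j)}_{\vec u\setminus\vec v}\big)-\sum_{\vec v'\subsetneq\vec v}g^{\mathrm{MC}}_{\vec v'}(\vec x_{\vec v'})\quad(\varnothing\neq\vec v\subseteq\vec u).$$ Then $g^{\mathrm{MC}}_\varnothing=\frac1M\sum_{\vec\omega\in\mathcal I_{\vec u}}a^\#_{\vec\omega}\sum_{j=1}^M\mathrm{e}^{\mathrm{i}\langle\vec x^{(j)},\vec\omega\rangle}$ and, for every $\vec v\subseteq\vec u$, $$g^{\mathrm{MC}}_{\vec v}(\vec x_{\vec v})=\frac1M\sum_{\vec\omega\in\mathcal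 I_{\vec u}}a^\#_{\vec\omega}\sum_{j=1}^M\mathrm{e}^{\mathrm{i}\langle\vec x^{(j)}_{\vec u\setminus\vec v},\vec\omega_{\vec u\setminus\vec v}\rangle}\prod_{i\in\vec v}\left(\mathrm{e}^{\mathrm{i}x_i\omega_i}-\mathrm{e}^{\mathrm{i}x^{(j)}_i\omega_i}\right).$$
   Context: $[d]=\{1,\dots,d\}$, $\mathcal P([d])$ its power set, $\vec x_{\vec v}=(x_i)_{i\in\vec v}$; $g(\vec x_{\vec v},\vec x^{(j)}_{\vec u\setminus\vec v})$ means $g$ evaluated at the point whose coordinates in $\vec v$ are those of $\vec x$ and whose coordinates in $\vec u\setminus\vec v$ are those of $\vec x^{(j)}$. *)

From HB Require Import structures.
From mathcomp Require Import all_boot all_order all_algebra.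
From mathcomp Require Import all_classical all_reals all_analysis.
From mathcomp Require Import complex.
Set Implicit Arguments. Unset Strict Implicit. Unset Printing Implicit Defensive.
Import Order.TTheory GRing.Theory Num.Theory.
Local Open Scope ring_scope.

Section Defs.
Variables (R : realType) (d M : nat).

Definition expi (t : R) : R[i] := Complex (cos t) (sin t).

Definition cR (t : R) : R[i] := Complex t 0.

Notation pt := ('I_d -> R).

Definition supp (om : 'rV[R]_d) : {set 'I_d} := [set i | om ord0 i != 0].

Definition mix (v : {set 'I_d}) (x y : pt) : pt :=
  fun i => if i \in v then x i else y i.

Definition gfun (u : {set 'I_d}) (I : seq 'rV[R]_d) (a : 'rV[R]_d -> R[i])
  (x : pt) : R[i] :=
  \sum_(om <- I) a om * expi (\sum_(i in u) om ord0 i * x i).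

(* Monte-Carlo ANOVA terms, defined by the recursion of the paper with a
   fuel parameter n (any n >= #|v| gives the intended value). *)
Fixpoint mc_fuel (g : pt -> R[i]) (X : 'I_M -> pt) (n : nat)
  (v : {set 'I_d}) (x : pt) : R[i] :=
  (cR M%:R)^-1 * \sum_(j < M) g (mix v x (X j)) -
  match n with
  | 0 => 0
  | n'.+1 => \sum_(v' : {set 'I_d} | v' \proper v) mc_fuel g X n' v' x
  end.

Definition gMC (g : pt -> R[i]) (X : 'I_M -> pt) (v : {set 'I_d}) (x : pt)
  : R[i] := mc_fuel g X #|v| v x.

End Defs.

(** Write each factor [e^{i x_k ω_k}], [k ∈ v], of the phase at the mixed
    point as [(e^{i x_k ω_k} - e^{i x^(j)_k ω_k}) + e^{i x^(j)_k ω_k}] and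
    expand the product: the Monte-Carlo mean [1/M Σ_j g(x_v, x^(j)_{u∖v})]
    becomes the sum over [w ⊆ v] of the claimed formula for [g^MC_w].  The
    recursion defining [g^MC] says that the same mean is the sum over [w ⊆ v]
    of the [g^MC_w].  A family indexed by the subsets of [u] is determined by
    these subset sums (Möbius inversion), so the two families agree. *)
From HB Require Import structures.
From mathcomp Require Import all_boot all_order all_algebra.
From mathcomp Require Import all_classical all_reals all_analysis.
From mathcomp Require Import complex.
Import Order.TTheory GRing.Theory Num.Theory.
Local Open Scope ring_scope.

Section Expi.
Variable R : realType.

Lemma expiD (s t : R) : expi (s + t) = expi s * expi t.
Proof.
by rewrite /expi sinD cosD [RHS]/GRing.mul /= [X in _ = Complex _ X]addrC.
Qed.

Lemma expi0 : expi (0 : R) = 1.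
Proof. by rewrite /expi sin0 cos0. Qed.

Lemma expi_sum (T : finType) (P : pred T) (F : T -> R) :
  expi (\sum_(i | P i) F i) = \prod_(i | P i) expi (F i).
Proof. exact: (big_morph _ expiD expi0). Qed.

End Expi.

Section SubsetSums.
Variable T : finType.

Lemma prodD_sum_subsets (C : comNzRingType) (v : {set T}) (F G : T -> C) :
  \prod_(i in v) (F i + G i) =
  \sum_(w : {set T} | w \subset v) \prod_(i in w) F i * \prod_(i in v :\: w) G i.
Proof.
rewrite big_mkcond /=.
rewrite (eq_bigr (fun i => (if i \in v then F i else 0) +
                           (if i \in v then G i else 1))); last first.
  by move=> i _; case: ifP; rewrite ?addr0 ?add0r.
rewrite (@bigA_distr C 0 1 *%R +%R T) (bigID (fun w : {set T} => w \subset v)) /=.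
rewrite [X in _ + X]big1 ?addr0 => [|w /subsetPn[i iw /negbTE iv]]; last first.
  by rewrite (bigD1 i) //= iw iv mul0r.
apply: eq_bigr => w wv.
rewrite [\prod_(i in w) _]big_mkcond [\prod_(i in v :\: w) _]big_mkcond.
rewrite -big_split; apply: eq_bigr => i _; rewrite !inE.
by case iw: (i \in w); rewrite /= ?(fintype.subsetP wv _ iw) ?mulr1 ?mul1r.
Qed.

Lemma prod_mix_sum_subsets (C : comNzRingType) (u v : {set T}) (F G : T -> C) :
  v \subset u ->
  \prod_(i in u) (if i \in v then F i else G i) =
  \sum_(w : {set T} | w \subset v)
     \prod_(i in u :\: w) G i * \prod_(i in w) (F i - G i).
Proof.
move=> vu; rewrite (big_setID v) /= (finset.setIidPr vu).
rewrite (eq_bigr (fun i => (F i - G i) + G i)) => [|i ->]; last by rewrite subrK.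
rewrite (eq_bigr G) => [|i /setDP[_ /negbTE->] //].
rewrite prodD_sum_subsets mulr_suml; apply: eq_bigr => w wv.
rewrite -mulrA mulrC; congr (_ * _).
rewrite [in RHS](big_setID v) /=; congr (_ * _); apply: eq_bigl => i; rewrite !inE.
  by case: (boolP (i \in v)) => iv; rewrite ?andbF // (fintype.subsetP vu _ iv) !andbT.
by case: (boolP (i \in v)) => //= iv; rewrite (contra (fintype.subsetP wv i) iv).
Qed.

Lemma sum_subsets_inj (V : zmodType) (u : {set T}) (f h : {set T} -> V) :
  (forall v : {set T}, v \subset u ->
     \sum_(w : {set T} | w \subset v) f w = \sum_(w : {set T} | w \subset v) h w) ->
  forall v : {set T}, v \subset u -> f v = h v.
Proof.
move=> fh v; have [n] := ubnP #|v|; elim: n v => // n IHn v /ltnSE vn vu.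
have := fh v vu; rewrite (bigD1 v) // [in RHS](bigD1 v) //=.
rewrite (eq_bigr h) => [/addIr //|w /andP[wv wnv]].
have wv' : w \proper v by rewrite finset.properEneq wnv.
by rewrite IHn ?(leq_trans (fintype.proper_card wv')) ?(fintype.subset_trans wv).
Qed.

End SubsetSums.

Section MonteCarlo.
Context {R : realType} {d M : nat}.
Variables (g : ('I_d -> R) -> R[i]) (X : 'I_M -> 'I_d -> R).

Definition mc_mean (v : {set 'I_d}) (x : 'I_d -> R) : R[i] :=
  (cR M%:R)^-1 * \sum_(j < M) g (mix v x (X j)).

Lemma mc_fuel_stable n m (v : {set 'I_d}) x :
  (#|v| <= n)%N -> (#|v| <= m)%N -> mc_fuel g X n v x = mc_fuel g X m v x.
Proof.
have no_proper (w v' : {set 'I_d}) : (#|v'| <= 0)%N -> (w \proper v') = false.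
  move=> v'0; apply/negbTE/negP => /fintype.proper_card.
  by rewrite ltnNge (leq_trans v'0).
elim: n m v => [|n IHn] [|m] v vn vm //=; congr (_ - _).
- by rewrite big_pred0 // => w; rewrite no_proper.
- by rewrite big_pred0 // => w; rewrite no_proper.
apply: eq_bigr => w /fintype.proper_card wv.
by apply: IHn; rewrite -ltnS (leq_trans wv).
Qed.

Lemma gMCE (v : {set 'I_d}) x :
  gMC g X v x = mc_mean v x - \sum_(w : {set 'I_d} | w \proper v) gMC g X w x.
Proof.
rewrite /gMC; case vn: #|v| => [|n] /=; congr (_ - _).
  rewrite big_pred0 // => w.
  by apply/negbTE/negP => /fintype.proper_card; rewrite vn.
apply: eq_bigr => w /fintype.proper_card wv; apply: mc_fuel_stable => //.
by rewrite -ltnS -vn.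
Qed.

Lemma mc_mean_sum_gMC (v : {set 'I_d}) x :
  mc_mean v x = \sum_(w : {set 'I_d} | w \subset v) gMC g X w x.
Proof.
rewrite (bigD1 v) //= gMCE.
have proper_subset :
    (fun w : {set 'I_d} => w \proper v) =1 (fun w => (w \subset v) && (w != v)).
  by move=> w; rewrite finset.properEneq andbC.
by rewrite (eq_bigl _ _ proper_subset) subrK.
Qed.

End MonteCarlo.

Section Fourier.
Context {R : realType} {d M : nat}.
Variables (X : 'I_M -> 'I_d -> R) (u : {set 'I_d}) (I : seq 'rV[R]_d)
  (a : 'rV[R]_d -> R[i]).

Definition gMC_fourier (v : {set 'I_d}) (x : 'I_d -> R) : R[i] :=
  (cR M%:R)^-1 * \sum_(om <- I) a om *
    \sum_(j < M) (expi (\sum_(i in u :\: v) X j i * om ord0 i) *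
      \prod_(i in v) (expi (x i * om ord0 i) - expi (X j i * om ord0 i))).

Lemma expi_mix (om : 'rV[R]_d) (v : {set 'I_d}) (x y : 'I_d -> R) :
  v \subset u ->
  expi (\sum_(i in u) om ord0 i * mix v x y i) =
  \sum_(w : {set 'I_d} | w \subset v)
     expi (\sum_(i in u :\: w) y i * om ord0 i) *
     \prod_(i in w) (expi (x i * om ord0 i) - expi (y i * om ord0 i)).
Proof.
move=> vu; rewrite expi_sum.
rewrite (eq_bigr (fun i => if i \in v then expi (x i * om ord0 i)
                                     else expi (y i * om ord0 i))); last first.
  by move=> i _; rewrite /mix mulrC; case: ifP.
by rewrite prod_mix_sum_subsets //; apply: eq_bigr => w _; rewrite expi_sum.
Qed.

Lemma mc_mean_gfun (v : {set 'I_d}) x : v \subset u ->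
  mc_mean (gfun u I a) X v x = \sum_(w : {set 'I_d} | w \subset v) gMC_fourier w x.
Proof.
move=> vu; rewrite /mc_mean /gMC_fourier -mulr_sumr; congr (_ * _).
rewrite /gfun exchange_big [RHS]exchange_big /=; apply: eq_bigr => om _.
rewrite -mulr_sumr -[RHS]mulr_sumr [in RHS]exchange_big /=; congr (_ * _).
by apply: eq_bigr => j _; apply: expi_mix.
Qed.

Lemma sum_mul_supp (om : 'rV[R]_d) (y : 'I_d -> R) : supp om = u ->
  \sum_(i in u) y i * om ord0 i = \sum_i y i * om ord0 i.
Proof.
move=> suppE; rewrite [RHS](bigID (mem u)) /= [X in _ + X]big1 ?addr0 // => i.
by rewrite -suppE inE negbK => /eqP ->; rewrite mulr0.
Qed.

End Fourier.

Theorem lemma5p1 (R : realType) (d M : nat) (X : 'I_M -> 'I_d -> R)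
  (U : {set {set 'I_d}}) (I : {set 'I_d} -> seq 'rV[R]_d)
  (a : 'rV[R]_d -> R[i]) (u : {set 'I_d}) :
  (0 < M)%N ->
  injective X ->
  (forall w, w \in U -> uniq (I w)) ->
  (forall w, w \in U -> forall om, om \in I w -> supp om = w) ->
  u \in U ->
  (forall v, v \in U -> ~~ (u \proper v)) ->
  let g := gfun u (I u) a in
  (forall x : 'I_d -> R,
     gMC g X finset.set0 x =
     (cR M%:R)^-1 * \sum_(om <- I u) a om *
        \sum_(j < M) expi (\sum_(i < d) X j i * om ord0 i)) /\
  (forall (v : {set 'I_d}) (x : 'I_d -> R), v \subset u ->
     gMC g X v x =
     (cR M%:R)^-1 * \sum_(om <- I u) a om *
        \sum_(j < M) (expi (\sum_(i in u :\: v) X j i * om ord0 i) *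
          \prod_(i in v) (expi (x i * om ord0 i) - expi (X j i * om ord0 i)))).
Proof.
move=> _ _ _ supp_I uU _ g.
have gMC_fourierE (v : {set 'I_d}) x :
    v \subset u -> gMC g X v x = gMC_fourier X u (I u) a v x.
  apply: (@sum_subsets_inj _ _ u (gMC g X ^~ x) (gMC_fourier X u (I u) a ^~ x)).
  by move=> w wu; rewrite -mc_mean_sum_gMC mc_mean_gfun.
split=> [x|]; last exact: gMC_fourierE.
rewrite gMC_fourierE ?finset.sub0set //; congr (_ * _); apply: eq_big_seq => om om_I.
congr (_ * _); apply: eq_bigr => j _.
by rewrite big_set0 mulr1 finset.setD0 sum_mul_supp // (supp_I u).
Qed.
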